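(* Let $X$ be a finite topological space and $A\subseteq X$. Then $\Psi(a,A)=\Psi(a,\overline{A})$ for all $a\in X$, where $\overline{A}$ is the closure of $A$ in $X$.
   Context: For a finite topological space $X$ and $x\in X$, $U_x$ denotes the minimal open set containing $x$. A nested sequence of open sets around $x$ is a finite sequence $U_0\subsetneq U_1\subsetneq\cdots\subsetneq U_m=X$ of open sets with $U_0=U_x$ such that for each $j$ there is no open set $V$ with $U_j\subsetneq V\subsetneq U_{j+1}$. The furtherness function $\Psi:X\times X\to\{0,1,\dots,|X|-1\}$ is defined by: $\Psi(x,y)$ is the smallest integer $k\ge 0$ such that there exists a nested sequence $(U_j)_{j\ge0}$ of open sets around $x$ with $y\in U_k$. For $a\in X$ and $B\subseteq X$, $\Psi(a,B)=\min_{b\in B}\Psi(a,b)$, with $\Psi(a,\emptyset)=\infty$. *)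

From mathcomp Require Import all_boot.
From Stdlib Require Import ClassicalEpsilon.
Set Implicit Arguments. Unset Strict Implicit. Unset Printing Implicit Defensive.

Section FiniteTopology.
Variable T : finType.
Implicit Types (O : {set {set T}}) (A B U V W : {set T}) (x y a : T).

(* On a finite carrier, closure under binary unions/intersections is
   equivalent to closure under arbitrary unions / finite intersections. *)
Definition is_topology O : Prop :=
  [/\ set0 \in O, setT \in O,
      (forall U V, U \in O -> V \in O -> U :|: V \in O) &
      (forall U V, U \in O -> V \in O -> U :&: V \in O)].

Definition Umin O x : {set T} := \bigcap_(U in O | x \in U) U.

Definition top_closure O A : {set T} := \bigcap_(C | (~: C \in O) && (A \subset C)) C.

Definition open_cover O U V : bool :=
  (U \proper V) && [forall W : {set T}, (W \in O) ==> ~~ ((U \proper W) && (W \proper V))].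

Definition nested_seq O x (U0 : {set T}) (rest : seq {set T}) : bool :=
  [&& U0 == Umin O x, all (fun U => U \in O) (U0 :: rest),
      path (open_cover O) U0 rest & last U0 rest == setT].

Definition reach_at O x y (k : nat) : Prop :=
  exists (U0 : {set T}) (rest : seq {set T}),
    nested_seq O x U0 rest /\ k < size (U0 :: rest) /\ y \in nth set0 (U0 :: rest) k.

Definition reach_atb O x y (k : nat) : bool :=
  if excluded_middle_informative (reach_at O x y k) then true else false.

(* furtherness function Psi(x,y): smallest such k (default 0 if none,
   which never happens in a finite topological space) *)
Definition Psi O x y : nat :=
  match excluded_middle_informative (exists k, reach_atb O x y k) with
  | left h => ex_minn h
  | right _ => 0
  end.

(* Psi(a,B) = min_{b in B} Psi(a,b); None encodes infinity (B empty) *)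
Definition PsiSet O a B : option nat :=
  match [pick b in B] with
  | None => None
  | Some b0 => Some (Psi O a [arg min_(b < b0 in B) Psi O a b])
  end.

End FiniteTopology.

(* A point in the closure of A lies in every open set around it meeting A; in
   particular the set U_k of a witnessing nested sequence for Psi(a,b) contains
   some c in A, so Psi(a,c) <= Psi(a,b).  Hence the minimum of Psi(a,-) over the
   closure is already attained on A. *)
From mathcomp Require Import all_boot.
From mathcomp Require Import zify.
From Stdlib Require Import ClassicalEpsilon.
Set Implicit Arguments. Unset Strict Implicit. Unset Printing Implicit Defensive.

Lemma PsiSet_dominated (T : finType) (O : {set {set T}}) (a : T) (A B : {set T}) :
  A \subset B ->
  (forall b, b \in B -> exists2 c, c \in A & Psi O a c <= Psi O a b) ->
  PsiSet O a A = PsiSet O a B.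
Proof.
move=> AB dom; rewrite /PsiSet.
case: pickP => [b0 b0A|A0]; last first.
  by case: pickP => // b /dom[c]; rewrite A0.
case: pickP => [b1 b1B|B0]; last by have := B0 b0; rewrite (subsetP AB).
congr Some.
case: (arg_minnP (Psi O a) b0A) => c cA cmin.
case: (arg_minnP (Psi O a) b1B) => d dB dmin.
apply/anti_leq; rewrite dmin ?andbT; last exact: (subsetP AB).
by have [e /cmin ce ed] := dom d dB; apply: leq_trans ed.
Qed.

Section FiniteTopology.
Variables (T : finType) (O : {set {set T}}).
Hypothesis topO : is_topology O.

Lemma Umin_open x : Umin O x \in O.
Proof.
case: topO => _ OT _ OI.
by apply: (big_ind (fun U => U \in O)) => // U /andP[].
Qed.

(* Induction on #|~: U|: step to an open V properly containing U of least size,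
   which is then covered by nothing strictly between U and V. *)
Lemma open_cover_path_to_setT (U : {set T}) : U \in O ->
  exists rest, [&& all (mem O) rest, path (open_cover O) U rest & last U rest == setT].
Proof.
move: {2}#|~: U| (leqnn #|~: U|) => n; elim: n U => [|n IH] U UcardC UO.
  exists [::]; apply/eqP; rewrite -[U]setCK.
  by move: UcardC; rewrite leqn0 cards_eq0 => /eqP ->; rewrite setC0.
have [->|UnT] := eqVneq U setT; first by exists [::]; rewrite /= eqxx.
have UTO : (setT \in O) && (U \proper setT) by case: topO => _ -> _ _; rewrite properT.
case: (@arg_minnP _ _ (fun V => (V \in O) && (U \proper V)) (fun V => #|V|) UTO) => V /andP[VO UV] Vmin.
have [|rest /and3P[restO Vpath Vlast]] := IH V _ VO.
  by have := proper_card UV; have := cardsC U; have := cardsC V; lia.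
exists (V :: rest); rewrite /= VO restO Vpath Vlast /open_cover UV !andbT /=.
apply/forallP => W; apply/implyP => WO; apply/negP => /andP[UW WV].
by have := Vmin W; rewrite WO UW => /(_ isT); have := proper_card WV; lia.
Qed.

Lemma reach_at_exists x y : exists k, reach_at O x y k.
Proof.
have [rest /and3P[restO Upath Ulast]] := open_cover_path_to_setT (Umin_open x).
exists (size rest), (Umin O x), rest; split.
  by rewrite /nested_seq eqxx /= Umin_open restO Upath Ulast.
by split=> //; rewrite (nth_last set0 (Umin O x :: rest)) /= (eqP Ulast) inE.
Qed.

Lemma Psi_spec x y :
  reach_at O x y (Psi O x y) /\ forall k, reach_at O x y k -> Psi O x y <= k.
Proof.
have reachbP k : reach_atb O x y k <-> reach_at O x y k.
  by rewrite /reach_atb; case: excluded_middle_informative.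
rewrite /Psi; case: excluded_middle_informative => [ex|nex]; last first.
  by case: nex; have [k /reachbP] := reach_at_exists x y; exists k.
by case: ex_minnP => m /reachbP reach_m m_min; split=> // k /reachbP /m_min.
Qed.

Lemma subset_closure (A : {set T}) : A \subset top_closure O A.
Proof. by apply/bigcapsP => C /andP[]. Qed.

Lemma closure_meets_open (A U : {set T}) b :
  U \in O -> b \in U -> b \in top_closure O A -> exists2 c, c \in A & c \in U.
Proof.
move=> UO bU bA; case: (set_0Vmem (A :&: U)) => [AU0|[c]]; last first.
  by rewrite inE => /andP[]; exists c.
suff /subsetP/(_ b bA) : top_closure O A \subset ~: U by rewrite inE bU.
apply: bigcap_inf; rewrite setCK UO; apply/subsetP => z zA.
by rewrite inE; apply/negP => zU; have := in_set0 z; rewrite -AU0 inE zA zU.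
Qed.

Lemma Psi_closure_dominated a (A : {set T}) b : b \in top_closure O A ->
  exists2 c, c \in A & Psi O a c <= Psi O a b.
Proof.
move=> bA; have [[U0 [rest [nested [lt_k bUk]]]] _] := Psi_spec a b.
set Uk := nth set0 (U0 :: rest) (Psi O a b) in bUk.
have UkO : Uk \in O by case/and4P: nested => _ /allP allO _ _; exact/allO/mem_nth.
have [c cA cUk] := closure_meets_open UkO bUk bA.
by exists c => //; apply: (Psi_spec a c).2; exists U0, rest.
Qed.

End FiniteTopology.

Theorem mainTheorem17 (T : finType) (O : {set {set T}}) :
  is_topology O ->
  forall (A : {set T}) (a : T), PsiSet O a A = PsiSet O a (top_closure O A).
Proof.
move=> topO A a; apply: PsiSet_dominated; first exact: subset_closure.
exact: Psi_closure_dominated.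
Qed.
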